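(* Let $\mathcal{M}=(W,E,V)$ be a playable coalition model, $w\in W$, $C,D\subseteq N$, $X,Y\subseteq W$. (1) If $X\subseteq Y$ then $\nu^w_C(X)\le_t\nu^w_C(Y)$. (2) If $C\subseteq D$ then $\nu^w_C(X)\le_k\nu^w_D(X)$.
   Context: $N$ is a finite set of agents. A coalition model is $\mathcal{M}=(W,E,V)$ with $W$ nonempty and $E_w(C)\subseteq\mathcal{P}(W)$ for each $w\in W$, $C\subseteq N$. Write $\overline{X}=W\setminus X$. $E_w$ is playable if for all $C,D\subseteq N$, $X,Y\subseteq W$: (i) $\emptyset\notin E_w(C)$; (ii) $W\in E_w(C)$; (iii) if $X\in E_w(C)$ and $X\subseteq Y$ then $Y\in E_w(C)$; (iv) if $C\cap D=\emptyset$, $X\in E_w(C)$, $Y\in E_w(D)$ then $X\cap Y\in E_w(C\cup D)$; (v) $X\notin E_w(\emptyset)$ iff $\overline{X}\in E_w(N)$; the model is playable if each $E_w$ is. The strategic value of $X$ for $C$ at $w$ is $\nu^w_C(X)=(a,b)\in\{0,1\}^2$ where $a=1$ iff $X\in E_w(C)$ and $b=1$ iff $\overline{X}\in E_w(C)$. On $\{0,1\}^2$: $(a,b)\le_k(a',b')$ iff $a\le a'$ and $b\le b'$ (determination order); $(a,b)\le_t(a',b')$ iff $a\le a'$ and $b'\le b$ (directionality order). *)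

From HB Require Import structures.
From mathcomp Require Import all_boot.
From mathcomp Require Import boolp classical_sets.
Set Implicit Arguments. Unset Strict Implicit. Unset Printing Implicit Defensive.
Local Open Scope classical_set_scope.

(* The valuation V plays no role here. *)

Definition effectivity (N : finType) (W : Type) := W -> {set N} -> set (set W).

Definition playable_at (N : finType) (W : Type) (E : effectivity N W) (w : W) : Prop :=
  [/\ (forall C : {set N}, ~ E w C set0),
      (forall C : {set N}, E w C setT),
      (forall (C : {set N}) (X Y : set W), E w C X -> X `<=` Y -> E w C Y),
      (forall (C D : {set N}) (X Y : set W), C :&: D = finset.set0 -> E w C X -> E w D Y ->
          E w (C :|: D) (X `&` Y))
    & (forall X : set W, ~ E w finset.set0 X <-> E w (finset.setTfor N) (~` X))].

Definition playable (N : finType) (W : Type) (E : effectivity N W) : Prop :=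
  (exists w : W, True) /\ forall w, playable_at E w.

(* strategic value nu^w_C(X) = (a,b) in {0,1}^2, with booleans for 0/1 *)
Definition nu (N : finType) (W : Type) (E : effectivity N W) (w : W)
  (C : {set N}) (X : set W) : bool * bool :=
  (`[< E w C X >], `[< E w C (~` X) >]).

Definition le_k (p q : bool * bool) : bool := (p.1 ==> q.1) && (p.2 ==> q.2).
Definition le_t (p q : bool * bool) : bool := (p.1 ==> q.1) && (q.2 ==> p.2).

From HB Require Import structures.
From mathcomp Require Import all_boot.
From mathcomp Require Import boolp classical_sets.
Local Open Scope classical_set_scope.

(* Outcome monotonicity makes both components of nu monotone in X, the second
   one antitone since it tests the complement.  Coalition monotonicity follows
   from superadditivity: C forces X and the disjoint coalition D \ C forces W,
   so D = C u (D \ C) forces X n W = X. *)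

Section StrategicValue.
Variables (N : finType) (W : Type) (E : effectivity N W) (w : W).

Hypothesis Emono :
  forall (C : {set N}) (X Y : set W), E w C X -> X `<=` Y -> E w C Y.
Hypothesis Etop : forall C : {set N}, E w C setT.
Hypothesis Esuper :
  forall (C D : {set N}) (X Y : set W), C :&: D = finset.set0 ->
    E w C X -> E w D Y -> E w (C :|: D) (X `&` Y).

Lemma nu_le_t_subset (C : {set N}) (X Y : set W) :
  X `<=` Y -> le_t (nu E w C X) (nu E w C Y).
Proof.
move=> sXY; apply/andP; split; apply/implyP => /asboolP EX; apply/asboolP.
- exact: Emono EX sXY.
- exact: Emono EX (subsetC sXY).
Qed.

Lemma effectivity_subset_coalition (C D : {set N}) (X : set W) :
  C \subset D -> E w C X -> E w D X.
Proof.
move=> sCD EX.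
have disjC : C :&: (D :\: C) = finset.set0.
  by apply/setP => a; rewrite !inE; case: (a \in C); rewrite ?andbF.
have DE : C :|: (D :\: C) = D.
  by rewrite -{2}(finset.setID D C) (finset.setIidPr sCD).
by rewrite -DE -[X]setIT; apply: Esuper disjC EX (Etop _).
Qed.

Lemma nu_le_k_subset (C D : {set N}) (X : set W) :
  C \subset D -> le_k (nu E w C X) (nu E w D X).
Proof.
move=> sCD; apply/andP; split; apply/implyP => /asboolP EX; apply/asboolP.
- exact: effectivity_subset_coalition sCD EX.
- exact: effectivity_subset_coalition sCD EX.
Qed.

End StrategicValue.

Theorem mainTheorem9 (N : finType) (W : Type) (E : effectivity N W)
  (V : nat -> set W) (* valuation, irrelevant to the claim *)
  (HE : playable E) (w : W) :
  (forall (C : {set N}) (X Y : set W), X `<=` Y -> le_t (nu E w C X) (nu E w C Y)) /\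
  (forall (C D : {set N}) (X : set W), C \subset D -> le_k (nu E w C X) (nu E w D X)).
Proof.
case: HE => _ /(_ w) [_ Etop Emono Esuper _].
split=> *; [exact: nu_le_t_subset | exact: nu_le_k_subset].
Qed.
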